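(* Let $M,F$ be positive integers and $\epsilon>0$, and set $B=\frac{e^\epsilon+1}{e^\epsilon-1}\cdot MF$. Consider the randomized algorithm $\mathcal{A}$ which, on input a real matrix $G\in\mathbb{R}^{M\times F}$, does the following: (1) initialize $\tilde G=0\in\mathbb{R}^{M\times F}$; (2) sample a row index $i\in\{1,\dots,M\}$ uniformly at random; (3) project the row $G^{i}$ onto $[-1,1]$, i.e. replace each entry $G^{i,f}$ by $\max(-1,\min(1,G^{i,f}))$; (4) sample a column index $f\in\{1,\dots,F\}$ uniformly at random, independently of $i$; (5) sample a Bernoulli random variable $\beta$ with $$\Pr[\beta=1]=\frac{G^{i,f}(e^\epsilon-1)+e^\epsilon+1}{2e^\epsilon+2},$$ where $G^{i,f}$ denotes the projected value from step (3); (6) if $\beta=1$ set $\tilde G^{i,f}=B$, otherwise set $\tilde G^{i,f}=-B$; (7) output $\tilde G$. Then $\mathcal{A}$ is an $\epsilon$-local randomizer: for all inputs $G,G'\in\mathbb{R}^{M\times F}$ and every possible output $Y$, $$\Pr[\mathcal{A}(G)=Y]\le e^\epsilon\cdot\Pr[\mathcal{A}(G')=Y].$$ Equivalently, $\mathcal{A}$ satisfies $\epsilon$-local differential privacy.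
   Context: A randomized algorithm $\Phi:\mathcal{U}\to\mathcal{Y}$ is an $\epsilon$-local randomizer ($\epsilon>0$) if for all inputs $x,x'\in\mathcal{U}$ and all outputs $Y$ of $\Phi$, $\Pr[\Phi(x)=Y]\le e^\epsilon\Pr[\Phi(x')=Y]$. In the paper, the input $G$ is a user's item-embedding gradient matrix with $M$ items and $F$ latent factors, and the output is a privatized report that is nonzero in exactly one entry. *)

From mathcomp Require Import all_boot all_order all_algebra.
From mathcomp Require Import all_classical all_reals all_analysis.
Set Implicit Arguments. Unset Strict Implicit. Unset Printing Implicit Defensive.
Import Order.TTheory GRing.Theory Num.Theory.
Local Open Scope ring_scope.

Section LDP.
Variable R : realType.

Definition Bconst (M F : nat) (eps : R) : R :=
  (expR eps + 1) / (expR eps - 1) * (M%:R * F%:R).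

Definition clip (x : R) : R := Num.max (-1) (Num.min 1 x).

Definition pbeta (eps g : R) : R :=
  (g * (expR eps - 1) + expR eps + 1) / (2 * expR eps + 2).

Definition report (M F : nat) (i : 'I_M) (f : 'I_F) (v : R) : 'M[R]_(M, F) :=
  \matrix_(a < M, b < F) (if (a == i) && (b == f) then v else 0).

(* Output distribution of the algorithm A: probability that A(G) = Y.
   i, f uniform and independent; beta Bernoulli(pbeta eps (clip (G i f))). *)
Definition prob_out (M F : nat) (eps : R) (G Y : 'M[R]_(M, F)) : R :=
  \sum_(i < M) \sum_(f < F)
    (M%:R^-1 * F%:R^-1) *
    (pbeta eps (clip (G i f)) * (Y == report i f (Bconst M F eps))%:R
     + (1 - pbeta eps (clip (G i f))) * (Y == report i f (- Bconst M F eps))%:R).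

(* epsilon-local randomizer, specialised to a discrete-output algorithm given by
   its output probability function *)
Definition local_randomizer (X Y : Type) (eps : R) (P : X -> Y -> R) : Prop :=
  forall (x x' : X) (y : Y), P x y <= expR eps * P x' y.

End LDP.

(* Each of the 2MF possible nonzero reports is produced with probability
   (1/MF) * p, where p is Pr[beta = 1] or Pr[beta = 0] for a clipped entry.
   Both lie in [1/(e^eps + 1), e^eps/(e^eps + 1)] whatever the input, so any two
   inputs give probabilities within a factor e^eps of each other, term by term. *)
From mathcomp Require Import all_boot all_order all_algebra.
From mathcomp Require Import all_classical all_reals all_analysis.
From mathcomp Require Import ring lra.
Import Order.TTheory GRing.Theory Num.Theory.
Local Open Scope ring_scope.

Section Bernoulli_ratio.
Variable R : realType.
Implicit Types eps g x : R.

Lemma clip_itv x : -1 <= clip x <= 1.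
Proof. by rewrite /clip le_max lexx ge_max ge_min lexx andbT; lra. Qed.

Lemma clipN_itv x : -1 <= - clip x <= 1.
Proof. by have /andP[lo hi] := clip_itv x; apply/andP; split; lra. Qed.

Lemma onem_pbeta eps g : 1 - pbeta eps g = pbeta eps (- g).
Proof.
have E0 : 0 < expR eps := expR_gt0 eps.
rewrite /pbeta; field; apply/eqP; lra.
Qed.

Lemma pbeta_ge eps g : 0 <= eps -> -1 <= g ->
  (expR eps + 1)^-1 <= pbeta eps g.
Proof.
move=> eps_ge0 g_ge; have E1 : 1 <= expR eps by rewrite -expR0 ler_expR.
have -> : (expR eps + 1)^-1 = 2 / (2 * expR eps + 2).
  by field; apply/andP; split; apply/eqP; lra.
by rewrite /pbeta ler_pM2r ?invr_gt0; nra.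
Qed.

Lemma pbeta_le eps g : 0 <= eps -> g <= 1 ->
  pbeta eps g <= expR eps * (expR eps + 1)^-1.
Proof.
move=> eps_ge0 g_le; have E1 : 1 <= expR eps by rewrite -expR0 ler_expR.
have -> : expR eps * (expR eps + 1)^-1 = 2 * expR eps / (2 * expR eps + 2).
  by field; apply/andP; split; apply/eqP; lra.
by rewrite /pbeta ler_pM2r ?invr_gt0; nra.
Qed.

Lemma pbeta_le_expR_pbeta eps g (g' : R) : 0 <= eps ->
  -1 <= g <= 1 -> -1 <= g' <= 1 -> pbeta eps g <= expR eps * pbeta eps g'.
Proof.
move=> eps_ge0 /andP[_ g_le] /andP[g'_ge _].
apply: le_trans (pbeta_le _ _ eps_ge0 g_le) _.
by rewrite ler_wpM2l ?expR_ge0 ?pbeta_ge.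
Qed.

End Bernoulli_ratio.

Theorem theorem1 (R : realType) (M F : nat) (eps : R) :
  (0 < M)%N -> (0 < F)%N -> 0 < eps ->
  local_randomizer eps (fun G Y : 'M[R]_(M, F) => @prob_out R M F eps G Y).
Proof.
move=> _ _ /ltW eps_ge0 G G' Y; rewrite /prob_out mulr_sumr.
apply: ler_sum => i _; rewrite mulr_sumr; apply: ler_sum => f _.
rewrite mulrCA ler_wpM2l ?mulr_ge0 ?invr_ge0 ?ler0n // !onem_pbeta mulrDr.
by apply: lerD; rewrite mulrA ler_wpM2r ?ler0n // pbeta_le_expR_pbeta ?clip_itv ?clipN_itv.
Qed.
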